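(* Assume the center manifold expansion hypothesis (H$_C$). Then for all $N>0$, $r>0$, $\sigma>0$ and every $i\ge -1$, $$c_i(\sigma N,\sigma^{\nu-1}r)=\frac{1}{\sigma}\,c_i(N,r).$$
   Context: Fix an integer $\nu\ge2$. For $N>0$ and $r>0$ let $w_{N,r}(\lambda)=\exp\!\big[-N\big(\tfrac{\lambda^2}{2}+\tfrac{r\lambda^{2\nu}}{2\nu}\big)\big]$ on $\mathbb R$. Let $\{\pi_n\}$ be the associated monic orthogonal polynomials, with recurrence $\lambda\pi_n=\pi_{n+1}+b_n^2\pi_{n-1}$ and $b_n^2>0$. Write $x_{n,N,r}:=b_n^2$. Hypothesis (H$_C$), the center manifold expansion: for every $N,r>0$ there are real numbers $c_i(N,r)$, $i\ge-1$, such that for every integer $m\ge-1$ there exist $K_{2,m}(N,r)>0$ and $n_1$ with $$\Big|x_{n,N,r}-\sum_{i=-1}^m c_i(N,r)\,n^{-i/\nu}\Big|<\frac{K_{2,m}(N,r)}{n^{(m+1)/\nu}}\quad\text{for all } n\ge n_1.$$ The coefficients $c_i(N,r)$ are then uniquely determined. *)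

From HB Require Import structures.
From mathcomp Require Import all_boot all_order all_algebra.
From mathcomp Require Import all_classical all_reals all_analysis.
Set Implicit Arguments. Unset Strict Implicit. Unset Printing Implicit Defensive.
Import Order.TTheory GRing.Theory Num.Theory.
Local Open Scope ring_scope.

Definition weight {R : realType} (nu : nat) (N r : R) (l : R) : R :=
  expR (- (N * (l ^+ 2 / 2 + r * l ^+ (2 * nu) / (2 * nu)%:R))).

Definition wip {R : realType} (nu : nat) (N r : R) (p q : {poly R}) : \bar R :=
  (\int[@lebesgue_measure R]_(l in [set: R]) (p.[l] * q.[l] * weight nu N r l)%:E)%E.

Definition monic_OP_family {R : realType} (nu : nat) (N r : R)
    (pi : nat -> {poly R}) : Prop :=
  forall n, [/\ pi n \is monic, size (pi n) = n.+1 &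
                forall m, (m < n)%N -> wip nu N r (pi n) (pi m) = 0%E].

(* The recurrence λ π_n = π_{n+1} + b_n^2 π_{n-1}  (with π_{-1} = 0),
   where b2 n = b_n^2 = x_{n,N,r}. *)
Definition OP_recurrence {R : realType} (pi : nat -> {poly R}) (b2 : nat -> R) : Prop :=
  'X * pi 0%N = pi 1%N /\
  forall n, (0 < n)%N -> 'X * pi n = pi n.+1 + b2 n *: pi n.-1.

(* Partial sum  Σ_{i=-1}^{m} c_i n^{-i/ν}, with m = m' - 1 for m' : nat
   (so m' ranges over m+1 >= 0). Index i = k - 1 for k < m'+1. *)
Definition cm_partial {R : realType} (nu : nat) (c : int -> R) (m' n : nat) : R :=
  \sum_(k < m'.+1) c (k%:Z - 1) * (n%:R) `^ (- ((k%:Z - 1)%:~R / nu%:R)).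

Definition center_manifold_expansion {R : realType} (nu : nat)
    (x : nat -> R) (c : int -> R) : Prop :=
  forall m' : nat, exists2 K : R, 0 < K &
    exists n1 : nat, forall n : nat, (n1 <= n)%N ->
      `| x n - cm_partial nu c m' n | < K / (n%:R) `^ (m'%:R / nu%:R).

(* Substituting l = sqrt(sigma) y turns w_{N,r} into w_{sigma N, sigma^(nu-1) r},
   so if pi' are the monic orthogonal polynomials for the scaled weight then
   n |-> sigma^(n/2) pi'_n(y / sqrt sigma) is a monic orthogonal family for w_{N,r}.
   Monic orthogonal polynomials are unique (the weighted inner product is
   positive definite), hence the recurrence coefficients satisfy
   x_{n,N,r} = sigma x_{n,sigma N,sigma^(nu-1) r} for n >= 1.  Dividing the
   expansion (H_C) of x_{n,N,r} by sigma yields an expansion of the scaled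
   coefficients, and the coefficients of such an expansion are unique since
   n^(1/nu) is unbounded. *)

From HB Require Import structures.
From mathcomp Require Import all_boot all_order all_algebra.
From mathcomp Require Import all_classical all_reals all_analysis.
From mathcomp Require Import measurable_realfun.
From mathcomp Require Import ring lra.
Set Implicit Arguments. Unset Strict Implicit. Unset Printing Implicit Defensive.
Import Order.TTheory GRing.Theory Num.Theory.
Import numFieldNormedType.Exports.
Local Open Scope classical_set_scope.
Local Open Scope ring_scope.

Section ExpansionCoefficients.
Variables (R : realType) (nu : nat).
Hypothesis nu_gt0 : (0 < nu)%N.

Lemma natr_powR_invn_unbounded (B : R) :
  exists m : nat, forall n : nat, (m <= n)%N -> B < n%:R `^ (nu%:R^-1).
Proof.
exists ((Num.truncn `|B|).+1 ^ nu)%N => n le_mn.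
have lt_Btrunc : B < (Num.truncn `|B|).+1%:R.
  by apply: (le_lt_trans (ler_norm B)); rewrite truncnS_gt.
apply: (lt_le_trans lt_Btrunc).
have -> : ((Num.truncn `|B|).+1%:R : R)
          = ((Num.truncn `|B|).+1 ^ nu)%:R `^ (nu%:R^-1).
  by rewrite natrX -powR_mulrn // -powRrM mulfV ?powRr1 // pnatr_eq0 -lt0n.
by apply: ge0_ler_powR; rewrite ?invr_ge0 ?ler_nat ?nnegrE.
Qed.

Lemma center_manifold_expansion_coef_unique (x : nat -> R) (a b : int -> R) :
  center_manifold_expansion nu x a -> center_manifold_expansion nu x b ->
  forall i : int, -1 <= i -> a i = b i.
Proof.
move=> xa xb; suff eq_ab k : a (k%:Z - 1) = b (k%:Z - 1).
  by move=> i ge_i; rewrite -(addrK 1 i) -[i + 1]gez0_abs ?eq_ab // -lerBlDr sub0r.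
elim/ltn_ind: k => k IH; have [Ka Ka_gt0 [na Hna]] := xa k.
have [Kb Kb_gt0 [nb Hnb]] := xb k.
set d := a (k%:Z - 1) - b (k%:Z - 1); apply/eqP; rewrite -subr_eq0 -/d.
apply: contraT => d_neq0; have d_gt0 : 0 < `|d| by rewrite normr_gt0.
have [m Hm] := natr_powR_invn_unbounded ((Ka + Kb) / `|d|).
pose n := maxn (maxn na nb) (maxn m 1).
have [n_gt0 [le_na le_nb le_m]] : (0 < n)%N /\ [/\ na <= n, nb <= n & m <= n]%N.
  by rewrite /n !leq_max !leqnn !orbT.
have nR_gt0 : (0 : R) < n%:R by rewrite ltr0n.
pose e j : R := n%:R `^ (- ((j%:Z - 1)%:~R / nu%:R)).
have diff_partial : cm_partial nu a k n - cm_partial nu b k n = d * e k.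
  rewrite /cm_partial !big_ord_recr /=.
  rewrite (eq_bigr (fun i : 'I_k => b (i%:Z - 1) * e i)); last by move=> i _; rewrite IH.
  by rewrite /d /e; lra.
have e_gt0 : 0 < e k by rewrite powR_gt0.
have eP : e k * n%:R `^ (k%:R / nu%:R) = n%:R `^ (nu%:R^-1).
  rewrite -powRD; last by rewrite pnatr_eq0 -lt0n n_gt0 implybT.
  congr (_ `^ _); rewrite intrD /= mulrC; field; by rewrite pnatr_eq0 -lt0n.
have lt_de : `|d| * e k < (Ka + Kb) / n%:R `^ (k%:R / nu%:R).
  rewrite -(gtr0_norm e_gt0) -normrM -diff_partial mulrDl.
  apply: le_lt_trans (ltrD (Hna n le_na) (Hnb n le_nb)).
  by rewrite (le_trans (ler_distD (x n) _ _)) // distrC.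
have := Hm n le_m; rewrite ltr_pdivrMr // mulrC -eP mulrA.
by move: lt_de; rewrite ltr_pdivlMr ?powR_gt0 // => /lt_trans h /h; rewrite ltxx.
Qed.

Lemma center_manifold_expansion_divr (x : nat -> R) (c : int -> R) (a : R) :
  0 < a -> center_manifold_expansion nu x c ->
  center_manifold_expansion nu (fun n => x n / a) (fun i => c i / a).
Proof.
move=> a_gt0 xc m'; have [K K_gt0 [n1 Hn]] := xc m'.
exists (K / a); first by rewrite divr_gt0.
exists n1 => n le_n1n.
have -> : cm_partial nu (fun i => c i / a) m' n = cm_partial nu c m' n / a.
  by rewrite /cm_partial big_distrl; apply: eq_bigr => k _; rewrite mulrAC.
rewrite -mulrBl normrM [`|a^-1|]ger0_norm ?invr_ge0 ?(ltW a_gt0) // mulrAC.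
by rewrite ltr_pM2r ?invr_gt0 //; exact: Hn.
Qed.

Lemma center_manifold_expansion_eq (x y : nat -> R) (c : int -> R) :
  (forall n, (0 < n)%N -> y n = x n) ->
  center_manifold_expansion nu x c -> center_manifold_expansion nu y c.
Proof.
move=> eq_yx xc m'; have [K K_gt0 [n1 Hn]] := xc m'.
exists K => //; exists (maxn n1 1) => n; rewrite geq_max => /andP[le_n1n n_gt0].
by rewrite eq_yx //; exact: Hn.
Qed.

End ExpansionCoefficients.

Lemma size_subZ_lead_monic (R : nzRingType) (p q : {poly R}) (n : nat) :
  p \is monic -> size p = n.+1 -> (size q <= n.+1)%N ->
  (size (q - q`_n *: p)%R <= n)%N.
Proof.
move=> /monicP p_monic size_p size_q; apply/leq_sizeP => j le_nj.
rewrite coefB coefZ; case: (ltngtP n j) le_nj => [lt_nj | // | <-] _.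
  by rewrite [q`_j]nth_default ?[p`_j]nth_default ?size_p ?(leq_trans size_q) ?mulr0 ?subr0.
by move: p_monic; rewrite lead_coefE size_p => ->; rewrite mulr1 subrr.
Qed.

Section OrthogonalMonicFamily.
Variables (R : fieldType) (form : {poly R} -> {poly R} -> R).
Hypotheses
  (formDl : forall p1 p2 q : {poly R}, form (p1 + p2) q = form p1 q + form p2 q)
  (formZl : forall (a : R) (p q : {poly R}), form (a *: p) q = a * form p q)
  (formC : forall p q : {poly R}, form p q = form q p)
  (form_anisotropic : forall p : {poly R}, p != 0 -> form p p != 0).

Definition orthogonal_monic_family (pi : nat -> {poly R}) : Prop :=
  forall n, [/\ pi n \is monic, size (pi n) = n.+1 &
                forall m, (m < n)%N -> form (pi n) (pi m) = 0].

Lemma formBl p1 p2 q : form (p1 - p2) q = form p1 q - form p2 q.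
Proof. by rewrite formDl -scaleN1r formZl mulN1r. Qed.

Lemma orthogonal_monic_family_size_lt (pi : nat -> {poly R}) :
  orthogonal_monic_family pi ->
  forall n (q : {poly R}), (size q <= n)%N -> form (pi n) q = 0.
Proof.
move=> pi_orth n.
suff orth_k k : (k <= n)%N -> forall q : {poly R}, (size q <= k)%N -> form (pi n) q = 0.
  by move=> q /orth_k; exact.
elim: k => [_ q | k IH lt_kn q size_q].
  by rewrite leqn0 size_poly_eq0 => /eqP->; rewrite formC -[0](scale0r 0) formZl mul0r.
have [pik_monic size_pik _] := pi_orth k; have [_ _ orth_n] := pi_orth n.
rewrite -(subrK (q`_k *: pi k) q) formC formDl formZl formC IH ?(ltnW lt_kn) //.
  by rewrite formC orth_n // mulr0 addr0.
exact: size_subZ_lead_monic.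
Qed.

Lemma orthogonal_monic_family_unique (pi pi' : nat -> {poly R}) :
  orthogonal_monic_family pi -> orthogonal_monic_family pi' -> pi =1 pi'.
Proof.
move=> pi_orth pi'_orth n; have [pin_monic size_pin _] := pi_orth n.
have [pi'n_monic size_pi'n _] := pi'_orth n.
have one_pin : (pi n)`_n = 1 by move/monicP: pin_monic; rewrite lead_coefE size_pin.
have size_d : (size (pi n - pi' n)%R <= n)%N.
  by rewrite -[pi' n]scale1r -one_pin size_subZ_lead_monic ?size_pin.
apply/eqP; rewrite -subr_eq0; apply: contraT => /form_anisotropic.
rewrite {1}formBl (orthogonal_monic_family_size_lt pi_orth size_d).
rewrite (orthogonal_monic_family_size_lt pi'_orth size_d).
by rewrite subrr eqxx.
Qed.

End OrthogonalMonicFamily.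

Section DilatedFamily.
Variables (R : fieldType) (s : R).
Hypothesis s_neq0 : s != 0.

Definition dilate_family (pi : nat -> {poly R}) (n : nat) : {poly R} :=
  s ^+ n *: (pi n \Po (s^-1 *: 'X)).

Lemma horner_dilate_family pi n y :
  (dilate_family pi n).[s * y] = s ^+ n * (pi n).[y].
Proof. by rewrite hornerZ horner_comp hornerZ hornerX mulKf. Qed.

Lemma dilate_family_monic pi n : pi n \is monic -> size (pi n) = n.+1 ->
  dilate_family pi n \is monic.
Proof.
move=> /monicP pi_monic size_pi; rewrite monicE lead_coefZ lead_coef_comp; last first.
  by rewrite size_scale ?invr_eq0 // size_polyX.
by rewrite pi_monic mul1r lead_coefZ lead_coefX mulr1 size_pi -exprMn mulfV ?expr1n.
Qed.

Lemma size_dilate_family pi n : size (dilate_family pi n) = size (pi n).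
Proof.
rewrite size_scale ?expf_neq0 // size_comp_poly2 //.
by rewrite size_scale ?invr_eq0 // size_polyX.
Qed.

End DilatedFamily.

Lemma OP_recurrence_dilate_family (R : realType) (s : R) (pi : nat -> {poly R})
    (b : nat -> R) :
  s != 0 -> OP_recurrence pi b ->
  OP_recurrence (dilate_family s pi) (fun n => s ^+ 2 * b n).
Proof.
move=> s_neq0; have X_dilate : 'X = s *: (s^-1 *: 'X) :> {poly R} by rewrite scalerA mulfV ?scale1r.
have dilateX n : 'X * dilate_family s pi n = s ^+ n.+1 *: (('X * pi n) \Po (s^-1 *: 'X)).
  by rewrite /dilate_family {1}X_dilate -scalerAl -scalerAr comp_polyM comp_polyX scalerA -exprS.
move=> [rec0 recS]; split; first by rewrite dilateX rec0.
move=> n n_gt0; rewrite dilateX recS // comp_polyD comp_polyZ scalerDr.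
rewrite /dilate_family !scalerA; congr (_ + _ *: _).
by rewrite mulrAC -exprD add2n prednK.
Qed.


Lemma OP_recurrence_coef_unique (R : realType) (pi : nat -> {poly R}) (b b' : nat -> R) :
  (forall n, pi n != 0) -> OP_recurrence pi b -> OP_recurrence pi b' ->
  forall n, (0 < n)%N -> b n = b' n.
Proof.
move=> pi_neq0 [_ recS] [_ recS'] n n_gt0.
have := recS' n n_gt0; rewrite recS // => /addrI /eqP.
by rewrite -subr_eq0 -scalerBl scaler_eq0 (negbTE (pi_neq0 _)) orbF subr_eq0 => /eqP.
Qed.

Lemma poly_neq0_exists_nonroot (R : numDomainType) (p : {poly R}) :
  p != 0 -> exists x, p.[x] != 0.
Proof.
move=> p_neq0; apply/not_existsP => all_roots; move/eqP: p_neq0; apply.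
apply: (@roots_geq_poly_eq0 _ p [seq i%:R | i <- iota 0 (size p)]).
- by apply/allP => y _; apply/negPn/negP; exact: all_roots.
- by rewrite map_inj_uniq ?iota_uniq // => i j /eqP; rewrite eqr_nat => /eqP.
- by rewrite size_map size_iota.
Qed.

Lemma normr_horner_le (R : realFieldType) (p : {poly R}) (l : R) :
  `|p.[l]| <= (\sum_(i < size p) `|p`_i|) * (1 + l ^+ 2) ^+ size p.
Proof.
rewrite horner_coef big_distrl /=.
apply: (le_trans (ler_norm_sum _ _ _)); apply: ler_sum => i _.
rewrite normrM ler_wpM2l // normrX.
have ge1_1Dsqr : 1 <= 1 + l ^+ 2 by rewrite lerDl sqr_ge0.
have le_norm_1Dsqr : `|l| <= 1 + l ^+ 2.
  by rewrite -[l ^+ 2]real_normK ?num_real //; have := sqr_ge0 (`|l| - 2^-1); lra.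
apply: (le_trans (lerXn2r _ _ _ le_norm_1Dsqr)); rewrite ?nnegrE ?normr_ge0 ?(le_trans ler01) //.
exact: (ler_weXn2l ge1_1Dsqr (ltnW (ltn_ord i))).
Qed.

Section WeightedIntegrals.
Variable R : realType.
Notation mu := (@lebesgue_measure R).

Lemma ge0_integral_scale (g : R -> R) (s : R) : 0 < s -> continuous g ->
  (forall x, 0 <= g x) ->
  (\int[mu]_x (g x)%:E = \int[mu]_x (g (s * x) * s)%:E)%E.
Proof.
move=> s_gt0 g_cont g_ge0; pose F x := s * x.
have F'E : (F^`())%classic = cst s.
  apply/funext => x; rewrite /F derive1E deriveM // derive_cst scaler0.
  by rewrite addr0 derive_id scaler1.
rewrite (@increasing_ge0_integration_by_substitutionT _ F g) //.
- by apply: eq_integral => x _; rewrite F'E.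
- by move=> x y; rewrite /F ltr_pM2l.
- by rewrite F'E => ?; exact: cvg_cst.
- by rewrite F'E; exact: is_cvg_cst.
- by rewrite F'E; exact: is_cvg_cst.
- by rewrite /F; under eq_fun do rewrite mulrC; exact: gt0_cvgMlNy.
- by rewrite /F; under eq_fun do rewrite mulrC; exact: gt0_cvgMly.
Qed.

Lemma integral_scale (f : R -> R) (s : R) : 0 < s -> continuous f ->
  (\int[mu]_x (f x)%:E = \int[mu]_x (f (s * x) * s)%:E)%E.
Proof.
move=> s_gt0 f_cont; rewrite integralE [in RHS]integralE.
have max0_cont (g : R -> R) : continuous g -> continuous (fun x => Num.max (g x) 0).
  by move=> g_cont x; apply: continuous_max (g_cont x) (cvg_cst _).
have max0_ge0 (g : R -> R) x : 0 <= Num.max (g x) 0 by rewrite le_max lexx orbT.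
congr (_ - _)%E.
- under eq_integral do rewrite funeposE -EFin_max.
  rewrite (@ge0_integral_scale _ s) //; last exact: max0_cont.
  by apply: eq_integral => x _; rewrite funeposE -EFin_max maxr_pMl ?mul0r ?ltW.
- under eq_integral do rewrite funenegE -EFin_max.
  rewrite (@ge0_integral_scale _ s) //; last by apply: max0_cont => x; apply: continuousN; exact: f_cont.
  by apply: eq_integral => x _; rewrite funenegE -EFin_max maxr_pMl ?mul0r ?mulNr ?ltW.
Qed.

Lemma continuous_ge0_integral_gt0 (g : R -> R) (x0 : R) : continuous g ->
  (forall x, 0 <= g x) -> 0 < g x0 -> (0 < \int[mu]_x (g x)%:E)%E.
Proof.
move=> g_cont g_ge0 gx0_gt0; pose c := g x0 / 2.
have c_gt0 : 0 < c by rewrite divr_gt0.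
have /cvgrPdist_lt /(_ c c_gt0) /nbhs_ballP [e /= e_gt0 near_x0] := g_cont x0.
pose I := `]x0 - e, x0 + e[.
have ge_c_I y : [set` I] y -> c <= g y.
  rewrite /= in_itv /= => /andP[lt_y lt_y'].
  have /near_x0 /= : ball x0 e y by rewrite -ball_normE /ball_ /= ltr_norml; apply/andP; lra.
  by have := ler_norm (g x0 - g y); rewrite /c; lra.
have g_mes : measurable_fun [set: R] (fun x => (g x)%:E).
  by apply/measurable_EFinP; exact: continuous_measurable_fun.
apply: (@lt_le_trans _ _ (\int[mu]_(x in [set` I]) (g x)%:E)%E); last first.
  by apply: ge0_subset_integral => //; move=> x _; rewrite lee_fin.
apply: (@lt_le_trans _ _ (\int[mu]_(x in [set` I]) (cst c%:E x))%E); last first.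
  apply: ge0_le_integral => //; first by move=> x _; rewrite lee_fin ltW.
  exact: measurable_funTS.
rewrite integral_cst // -[X in (_ * X)%E]/(mu [set` I]) /I lebesgue_measure_itv /= lte_fin.
have -> : (x0 - e < x0 + e)%R by lra.
by rewrite -EFinD -EFinM lte_fin mulr_gt0 //; lra.
Qed.

Lemma integrable_expR_Nsqr (c : R) : 0 < c ->
  mu.-integrable [set: R] (fun x => (expR (- (c * x ^+ 2)))%:E).
Proof.
move=> c_gt0; pose s := Num.sqrt (2^-1 / c).
have s_neq0 : s != 0 by rewrite /s gt_eqF // sqrtr_gt0 divr_gt0.
have s2 : s ^+ 2 *+ 2 = c^-1.
  by rewrite /s sqr_sqrtr ?divr_ge0 ?ltW // -mulr_natr; field; rewrite gt_eqF.
have := integrableZl measurableT (normal_peak s)^-1 (@integrable_normal_pdf R 0 s).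
apply: eq_integrable => // x _.
rewrite normal_pdfE // /normal_fun /= -EFinM mulrA mulVf ?gt_eqF ?normal_peak_gt0 //.
by rewrite mul1r s2 subr0 invrK; congr (expR _)%:E; rewrite mulNr mulrC.
Qed.

End WeightedIntegrals.

Lemma expr_1Dsqr_le_expR (R : realType) (a l : R) (d : nat) : 0 < a -> a <= 1 ->
  (1 + l ^+ 2) ^+ d <= a ^- d * expR (d%:R * a * l ^+ 2).
Proof.
move=> a_gt0 a_le1; rewrite -mulrA expRM_natl -exprVn -exprMn.
have le_1Dsqr : 1 + l ^+ 2 <= a^-1 * expR (a * l ^+ 2).
  apply: (@le_trans _ _ (a^-1 * (1 + a * l ^+ 2))).
    by rewrite mulrDr mulrA mulVf ?gt_eqF // mul1r mulr1 lerD2r invf_ge1.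
  by rewrite ler_pM2l ?invr_gt0 // expR_ge1Dx.
by apply: lerXn2r le_1Dsqr; rewrite nnegrE ?addr_ge0 ?sqr_ge0 ?mulr_ge0 ?invr_ge0 ?expR_ge0 ?ltW.
Qed.

Section WeightedInnerProduct.
Variables (R : realType) (nu : nat) (N r : R).
Hypotheses (N_gt0 : 0 < N) (r_ge0 : 0 <= r).
Notation mu := (@lebesgue_measure R).
Notation weight := (weight nu N r).

Lemma weight_continuous : continuous weight.
Proof.
pose w : {poly R} :=
  - (N%:P * ('X^2 * (2^-1)%:P + r%:P * 'X^(2 * nu) * (((2 * nu)%:R)^-1)%:P)).
have -> : weight = expR \o horner w by apply/funext => l /=; rewrite /weight /w !hornerE.
by move=> x; apply: continuous_comp; [exact: continuous_horner | exact: continuous_expR].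
Qed.

Lemma weight_le_expR l : weight l <= expR (- (N * l ^+ 2 / 2)).
Proof.
rewrite /weight ler_expR lerN2 -mulrA ler_wpM2l ?(ltW N_gt0) // lerDl.
by rewrite mulr_ge0 ?invr_ge0 // mulr_ge0 // exprM exprn_ge0 // sqr_ge0.
Qed.

Lemma horner_weight_le_expR (p : {poly R}) : exists2 C : R, 0 <= C &
  forall l, `|p.[l] * weight l| <= C * expR (- (N / 4 * l ^+ 2)).
Proof.
set A := \sum_(i < size p) `|p`_i|; set d := size p; set t := N / 4.
have t_gt0 : 0 < t by rewrite divr_gt0.
(* a Gaussian factor expR (d a l^2) with d a <= N/4 absorbs the polynomial growth *)
pose a := t / (d.+1%:R + t).
have den_gt0 : 0 < d.+1%:R + t by rewrite addr_gt0.
have a_gt0 : 0 < a by rewrite divr_gt0.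
have a_le1 : a <= 1 by rewrite ler_pdivrMr // mul1r lerDr.
have da_le : d%:R * a <= t.
  rewrite /a mulrA ler_pdivrMr // -natr1 mulrC ler_pM2l // -addrA lerDl.
  by rewrite addr_ge0 // ltW.
have A_ge0 : 0 <= A by rewrite sumr_ge0.
have C_ge0 : 0 <= A * a ^- d by rewrite mulr_ge0 // invr_ge0 exprn_ge0 // ltW.
exists (A * a ^- d) => // l; have w_ge0 : 0 <= weight l := ltW (expR_gt0 _).
have le_exp : expR (d%:R * a * l ^+ 2) * expR (- (N * l ^+ 2 / 2)) <= expR (- (t * l ^+ 2)).
  rewrite -expRD ler_expR; have := ler_wpM2r (sqr_ge0 l) da_le.
  by have := mulr_ge0 (ltW t_gt0) (sqr_ge0 l); rewrite /t; lra.
have le_p : `|p.[l]| <= A * (a ^- d * expR (d%:R * a * l ^+ 2)).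
  exact: le_trans (normr_horner_le p l) (ler_wpM2l A_ge0 (expr_1Dsqr_le_expR l d a_gt0 a_le1)).
rewrite normrM (ger0_norm w_ge0) (le_trans (ler_pM _ _ le_p (weight_le_expR l))) //.
set E1 := expR (_ * l ^+ 2) in le_exp *; set E2 := expR (- (N * l ^+ 2 / 2)) in le_exp *.
rewrite -mulrA -[A / _ * _]mulrA ler_wpM2l // -mulrA ler_wpM2l //.
by rewrite invr_ge0 exprn_ge0 // ltW.
Qed.

Lemma integrable_horner_weight (p : {poly R}) :
  mu.-integrable [set: R] (fun l => (p.[l] * weight l)%:E).
Proof.
have [C C_ge0 le_C] := horner_weight_le_expR p.
have := integrableZl measurableT C (integrable_expR_Nsqr (divr_gt0 N_gt0 (ltr0n _ 4))).
apply: le_integrable => //.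
- apply/measurable_EFinP; apply: continuous_measurable_fun => x.
  by apply: cvgM; [exact: continuous_horner | exact: weight_continuous].
- by move=> x _; rewrite -EFinM !abse_EFin lee_fin (le_trans (le_C x) (ler_norm _)).
Qed.


Definition wip_real (p q : {poly R}) : R := fine (wip nu N r p q).

Lemma integrable_wip (p q : {poly R}) :
  mu.-integrable [set: R] (fun l => (p.[l] * q.[l] * weight l)%:E).
Proof.
by apply: eq_integrable (integrable_horner_weight (p * q)) => // x _; rewrite hornerM.
Qed.

Lemma wipE (p q : {poly R}) : wip nu N r p q = (wip_real p q)%:E.
Proof. by rewrite /wip_real fineK // (integrable_fin_num _ (integrable_wip p q)). Qed.

Lemma wip_realDl (p1 p2 q : {poly R}) :
  wip_real (p1 + p2) q = wip_real p1 q + wip_real p2 q.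
Proof.
apply/eqP; rewrite -eqe EFinD -!wipE /wip -integralD //; try exact: integrable_wip.
by apply/eqP; apply: eq_integral => x _; rewrite hornerD !mulrDl EFinD.
Qed.

Lemma wip_realZl (a : R) (p q : {poly R}) : wip_real (a *: p) q = a * wip_real p q.
Proof.
apply/eqP; rewrite -eqe EFinM -!wipE /wip -integralZl //; last exact: integrable_wip.
by apply/eqP; apply: eq_integral => x _; rewrite hornerZ -!mulrA EFinM.
Qed.

Lemma wip_realC (p q : {poly R}) : wip_real p q = wip_real q p.
Proof.
by rewrite /wip_real /wip; congr fine; apply: eq_integral => x _; rewrite (mulrC p.[x]).
Qed.

Lemma wip_real_gt0 (p : {poly R}) : p != 0 -> 0 < wip_real p p.
Proof.
move=> p_neq0; have [x0 px0_neq0] := poly_neq0_exists_nonroot p_neq0.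
rewrite -lte_fin -wipE; apply: (continuous_ge0_integral_gt0 (x0 := x0)).
- move=> x; apply: cvgM; last exact: weight_continuous.
  by apply: cvgM; exact: continuous_horner.
- by move=> x; rewrite -expr2 mulr_ge0 ?sqr_ge0 // ltW ?expR_gt0.
- by rewrite -expr2 mulr_gt0 ?expR_gt0 // exprn_even_gt0.
Qed.

Lemma monic_OP_family_orthogonal (pi : nat -> {poly R}) :
  monic_OP_family nu N r pi -> orthogonal_monic_family wip_real pi.
Proof.
move=> pi_OP n; have [monic_n size_n orth_n] := pi_OP n.
by split=> // m lt_mn; apply/eqP; rewrite -eqe -wipE orth_n.
Qed.

Lemma monic_OP_family_unique (pi pi' : nat -> {poly R}) :
  monic_OP_family nu N r pi -> monic_OP_family nu N r pi' -> pi =1 pi'.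
Proof.
move=> /monic_OP_family_orthogonal pi_orth /monic_OP_family_orthogonal pi'_orth.
apply: orthogonal_monic_family_unique pi_orth pi'_orth.
- exact: wip_realDl.
- exact: wip_realZl.
- exact: wip_realC.
- by move=> p /wip_real_gt0 /lt0r_neq0.
Qed.

End WeightedInnerProduct.

Section Dilation.
Variables (R : realType) (nu : nat) (N r sg : R).
Hypotheses (nu_gt0 : (0 < nu)%N) (N_gt0 : 0 < N) (r_ge0 : 0 <= r) (sg_gt0 : 0 < sg).

Lemma weight_sqrt_scale (y : R) :
  weight nu N r (Num.sqrt sg * y) = weight nu (sg * N) (sg ^+ nu.-1 * r) y.
Proof.
rewrite /weight !exprMn sqr_sqrtr ?ltW // exprM sqr_sqrtr ?ltW //.
have -> : sg ^+ nu = sg * sg ^+ nu.-1 by rewrite -exprS prednK.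
have nu_neq0 : (nu%:R : R) != 0 by rewrite pnatr_eq0 -lt0n.
by congr (expR (- _)); field.
Qed.

Lemma monic_OP_family_dilate (pi : nat -> {poly R}) :
  monic_OP_family nu (sg * N) (sg ^+ nu.-1 * r) pi ->
  monic_OP_family nu N r (dilate_family (Num.sqrt sg) pi).
Proof.
set s := Num.sqrt sg => pi_OP n; have [monic_n size_n orth_n] := pi_OP n.
have s_gt0 : 0 < s by rewrite sqrtr_gt0.
have s_neq0 : s != 0 by rewrite gt_eqF.
split; [exact: dilate_family_monic | by rewrite size_dilate_family | move=> m lt_mn].
rewrite /wip (@integral_scale _ _ s) //; last first.
  move=> x; apply: cvgM; last exact: weight_continuous.
  by apply: cvgM; exact: continuous_horner.
transitivity (\int[@lebesgue_measure R]_(x in [set: R]) ((s ^+ (n + m).+1)%:E *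
   ((pi n).[x] * (pi m).[x] * weight nu (sg * N) (sg ^+ nu.-1 * r) x)%:E))%E.
  apply: eq_integral => x _; rewrite !horner_dilate_family // weight_sqrt_scale -EFinM.
  by congr EFin; rewrite exprS exprD; set w := weight _ _ _ _; ring.
have sgN_gt0 : 0 < sg * N by rewrite mulr_gt0.
have sgr_ge0 : 0 <= sg ^+ nu.-1 * r by rewrite mulr_ge0 // exprn_ge0 // ltW.
rewrite integralZl //; last exact: integrable_wip.
by have := orth_n m lt_mn; rewrite /wip => ->; rewrite mule0.
Qed.

End Dilation.

Theorem lemmaB1 (R : realType) (nu : nat) (hnu : (2 <= nu)%N)
    (pi : R -> R -> nat -> {poly R}) (x : R -> R -> nat -> R)
    (c : R -> R -> int -> R)
    (hpi : forall N r : R, 0 < N -> 0 < r -> monic_OP_family nu N r (pi N r))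
    (hx : forall N r : R, 0 < N -> 0 < r -> OP_recurrence (pi N r) (x N r))
    (hHC : forall N r : R, 0 < N -> 0 < r ->
             center_manifold_expansion nu (x N r) (c N r)) :
  forall (N r sigma : R), 0 < N -> 0 < r -> 0 < sigma ->
  forall i : int, (-1 <= i)%R ->
    c (sigma * N) (sigma ^+ nu.-1 * r) i = c N r i / sigma.
Proof.
move=> N r sg N_gt0 r_gt0 sg_gt0 i ge_i; have nu_gt0 : (0 < nu)%N by apply: ltnW.
set N' := sg * N; set r' := sg ^+ nu.-1 * r; set s := Num.sqrt sg.
have N'_gt0 : 0 < N' by rewrite mulr_gt0.
have r'_gt0 : 0 < r' by rewrite mulr_gt0 ?exprn_gt0.
have s_neq0 : s != 0 by rewrite gt_eqF // sqrtr_gt0.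
have pi_dilate : pi N r =1 dilate_family s (pi N' r').
  apply: (monic_OP_family_unique N_gt0 (ltW r_gt0) (hpi N r N_gt0 r_gt0)).
  exact (monic_OP_family_dilate nu_gt0 N_gt0 (ltW r_gt0) sg_gt0 (hpi N' r' N'_gt0 r'_gt0)).
have x_scale n : (0 < n)%N -> x N' r' n = x N r n / sg.
  move=> n_gt0; have := hx N r N_gt0 r_gt0; rewrite (funext pi_dilate) => rec.
  have pi_neq0 k : dilate_family s (pi N' r') k != 0.
    by rewrite -pi_dilate; have [/monic_neq0] := hpi N r N_gt0 r_gt0 k.
  have := OP_recurrence_coef_unique pi_neq0 rec
    (OP_recurrence_dilate_family s_neq0 (hx N' r' N'_gt0 r'_gt0)) n_gt0.
  by rewrite sqr_sqrtr ?ltW // => ->; rewrite mulrC mulKf ?gt_eqF.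
have xc' := center_manifold_expansion_divr sg_gt0 (hHC N r N_gt0 r_gt0).
have xc'' := center_manifold_expansion_eq x_scale xc'.
exact (center_manifold_expansion_coef_unique nu_gt0 (hHC N' r' N'_gt0 r'_gt0) xc'' ge_i).
Qed.
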